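(* Let $K$ be a kernel as below, $\mathbf{n}\in\mathbb{N}^d$, and suppose $\rho_{\mathbf{j}}(\mathbf{0})\ne0$ for all $\mathbf{j}\in\Omega_{\mathbf{n}}^*$. Then for every function $f:\mathbb{T}^d\to\mathbb{R}$ there is a unique sk-spline $s\in SK(\Lambda_{\mathbf{n}})$ satisfying $s(\mathbf{x}_{\mathbf{j}})=f(\mathbf{x}_{\mathbf{j}})$ for all $\mathbf{j}\in\Omega_{\mathbf{n}}$, and it is given by $$s(\mathbf{x})=sk_{\mathbf{n}}(f,\mathbf{x})=\sum_{\mathbf{k}\in\Omega_{\mathbf{n}}}f(\mathbf{x}_{\mathbf{k}})\,\widetilde{sk}_{\mathbf{n}}(\mathbf{x}-\mathbf{x}_{\mathbf{k}}),\qquad\mathbf{x}\in\mathbb{T}^d.$$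
   Context: $\mathbb{T}^d=(\mathbb{R}/2\pi\mathbb{Z})^d$. Kernel: $K(\mathbf{x})=\sum_{\mathbf{l}\in\mathbb{Z}^d}a_{\mathbf{l}}e^{i\mathbf{l}\cdot\mathbf{x}}$ with $(a_{\mathbf{l}})$ real, $a_{\mathbf{l}}=a_{-\mathbf{l}}$, $\sum_{\mathbf{l}}|a_{\mathbf{l}}|<\infty$. Notation: $\mathbf{x}\cdot\mathbf{y}=\sum_ix_iy_i$; fix $\mathbf{n}\in\mathbb{N}^d$, $\mathbf{x}_{\mathbf{k}}=(\pi k_1/n_1,\dots,\pi k_d/n_d)$ for $\mathbf{k}\in\mathbb{Z}^d$, $\Omega_{\mathbf{n}}=\{\mathbf{j}\in\mathbb{Z}^d:0\le j_l\le 2n_l-1\}$, $\Omega_{\mathbf{n}}^*=\Omega_{\mathbf{n}}\setminus\{\mathbf{0}\}$, $\Lambda_{\mathbf{n}}=\{\mathbf{x}_{\mathbf{k}}:\mathbf{k}\in\Omega_{\mathbf{n}}\}$, $N=2^dn_1\cdots n_d$. For $\mathbf{j}\in\mathbb{Z}^d$: $\rho_{\mathbf{j}}(\mathbf{x})=\frac{2}{N}\sum_{\mathbf{k}\in\Omega_{\mathbf{n}}}\cos(\mathbf{j}\cdot\mathbf{x}_{\mathbf{k}})K(\mathbf{x}-\mathbf{x}_{\mathbf{k}})$. An sk-spline on $\Lambda_{\mathbf{n}}$ (associated with $K$) is a function $s(\mathbf{x})=c+\sum_{\mathbf{k}\in\Omega_{\mathbf{n}}}c_{\mathbf{k}}K(\mathbf{x}-\mathbf{x}_{\mathbf{k}})$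 with $c,c_{\mathbf{k}}\in\mathbb{R}$ and $\sum_{\mathbf{k}\in\Omega_{\mathbf{n}}}c_{\mathbf{k}}=0$; $SK(\Lambda_{\mathbf{n}})$ is the real vector space of these. The fundamental sk-spline is $\widetilde{sk}_{\mathbf{n}}(\mathbf{x})=\frac1N+\frac1N\sum_{\mathbf{j}\in\Omega_{\mathbf{n}}^*}\frac{\rho_{\mathbf{j}}(\mathbf{x})}{\rho_{\mathbf{j}}(\mathbf{0})}$. *)

From Stdlib Require Import Reals ZArith.
From mathcomp Require Import all_boot.
Set Implicit Arguments. Unset Strict Implicit. Unset Printing Implicit Defensive.

Local Open Scope R_scope.

Notation "\rsum_ ( i | P ) F" := (\big[Rplus/R0]_(i | P) F) (at level 41, F at level 41, i at level 50).
Notation "\rsum_ ( i < d ) F" := (\big[Rplus/R0]_(i < d) F) (at level 41, F at level 41, i, d at level 50).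

(* points of R^d (representatives of points of T^d) *)
Definition pt (d : nat) := 'I_d -> R.
Definition ptsub d (x y : pt d) : pt d := fun i => x i - y i.
Definition pt0 d : pt d := fun _ => 0.
Definition dotR d (x y : pt d) : R := \rsum_(i < d) (x i * y i).
Definition dotZ d (l : 'I_d -> Z) (x : pt d) : R := \rsum_(i < d) (IZR (l i) * x i).
Definition dotN d (j : 'I_d -> nat) (x : pt d) : R := \rsum_(i < d) (INR (j i) * x i).

Definition box_idx d (M : nat) (t : {ffun 'I_d -> 'I_(2 * M + 1)}) : 'I_d -> Z :=
  fun i => (Z.of_nat (nat_of_ord (t i)) - Z.of_nat M)%Z.
Definition boxsum d (M : nat) (F : ('I_d -> Z) -> R) : R :=
  \big[Rplus/R0]_(t : {ffun 'I_d -> 'I_(2 * M + 1)}) F (@box_idx d M t).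

(* K(x) = sum_{l in Z^d} a_l e^{i l.x}, with (a_l) real, a_l = a_{-l},
   sum |a_l| < oo.  Absolute summability is expressed by boundedness of the
   (nonnegative) partial sums over the boxes [-M,M]^d; the (then unconditionally
   convergent) sum is the limit of the symmetric box partial sums.  Since a is
   real and even, each symmetric box partial sum of a_l e^{i l.x} equals the
   real number sum a_l cos(l.x). *)
Definition is_kernel d (a : ('I_d -> Z) -> R) (K : pt d -> R) : Prop :=
  (forall l, a l = a (fun i => (- l i)%Z)) /\
  (exists B, forall M, boxsum M (fun l => Rabs (a l)) <= B) /\
  (forall x, Un_cv (fun M => boxsum M (fun l => a l * cos (dotZ l x))) (K x)).

Section Grid.
Variables (d : nat) (n : 'I_d -> nat).

(* ambient bound for indices: every k in Omega_n has k_i < 2 n_i <= Mb *)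
Definition Mb : nat := (2 * \max_(i < d) n i)%N.
Definition idx := {ffun 'I_d -> 'I_Mb}.
Definition idxN (k : idx) : 'I_d -> nat := fun i => nat_of_ord (k i).

Definition in_Omega (k : idx) : bool := [forall i, (k i < 2 * n i)%N].
Definition in_Omega_star (k : idx) : bool := in_Omega k && [exists i, (nat_of_ord (k i) != 0)%N].

Definition sumOmega (F : idx -> R) : R := \rsum_(k | in_Omega k) F k.
Definition sumOmega_star (F : idx -> R) : R := \rsum_(k | in_Omega_star k) F k.

Definition xk (k : 'I_d -> nat) : pt d := fun i => PI * INR (k i) / INR (n i).
Definition xg (k : idx) : pt d := xk (idxN k).

Definition Nn : R := INR (2 ^ d * \prod_(i < d) n i)%N.

Variable K : pt d -> R.

Definition rho (j : 'I_d -> nat) (x : pt d) : R :=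
  2 / Nn * sumOmega (fun k => cos (dotN j (xg k)) * K (ptsub x (xg k))).

Definition is_sk_spline (s : pt d -> R) : Prop :=
  exists (c : R) (ck : idx -> R),
    sumOmega ck = 0 /\
    forall x, s x = c + sumOmega (fun k => ck k * K (ptsub x (xg k))).

Definition sk_fund (x : pt d) : R :=
  1 / Nn + 1 / Nn * sumOmega_star (fun j => rho (idxN j) x / rho (idxN j) (@pt0 d)).

Definition sk_interp (f : pt d -> R) (x : pt d) : R :=
  sumOmega (fun k => f (xg k) * sk_fund (ptsub x (xg k))).

End Grid.

(* The grid Lambda_n is the group Z/(2 n_1) x ... x Z/(2 n_d), and the characters
   k |-> cos (j . x_k + b), j in Omega_n^*, sum to zero over it: translating the grid
   by a unit vector rotates all these angles by one angle that is not a multiple of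
   2 pi.  As K is even and 2 pi-periodic, this diagonalises rho_j on the grid,
   rho_j (x_q - x_k) = cos (j . (x_q - x_k)) rho_j (0), so that the fundamental
   sk-spline satisfies sk~_n (x_q - x_k) = delta_qk by discrete Fourier inversion;
   hence sk_n f is an sk-spline interpolating f.  For uniqueness, expanding
   sk~_n (. - x_p) in the translates K (. - x_m) yields coefficients e_pm with
   sum_m e_pm = 0 and sum_q e_pq K (x_q - x_k) = delta_kp - 1/N, which recover the
   coefficient c_p of any sk-spline from its values on the grid. *)

From Stdlib Require Import Reals ZArith Lra Lia FunctionalExtensionality.
From HB Require Import structures.
From mathcomp Require Import all_boot zify.
Set Implicit Arguments. Unset Strict Implicit. Unset Printing Implicit Defensive.
Local Open Scope R_scope.

Lemma Rplus_assoc_law : associative Rplus.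
Proof. by move=> x y z; rewrite Rplus_assoc. Qed.

HB.instance Definition _ :=
  Monoid.isComLaw.Build R R0 Rplus Rplus_assoc_law Rplus_comm Rplus_0_l.
HB.instance Definition _ := Monoid.isMulLaw.Build R R0 Rmult Rmult_0_l Rmult_0_r.
HB.instance Definition _ :=
  Monoid.isAddLaw.Build R Rmult Rplus Rmult_plus_distr_r Rmult_plus_distr_l.

Section RealSums.
Variables (I : finType) (P : pred I).
Implicit Types (F G : I -> R).

Lemma rsumN F : \rsum_(i | P i) (- F i) = - \rsum_(i | P i) F i.
Proof. by rewrite (big_morph Ropp Ropp_plus_distr Ropp_0). Qed.

Lemma rsumB F G : \rsum_(i | P i) (F i - G i) = \rsum_(i | P i) F i - \rsum_(i | P i) G i.
Proof. by rewrite big_split rsumN. Qed.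

Lemma rsum_const1 : \rsum_(i | P i) 1 = INR #|P|.
Proof. by rewrite big_const; elim: #|P| => // m IH; rewrite iterS IH S_INR Rplus_comm. Qed.

Lemma rsum_delta F j : P j -> \rsum_(i | P i) (if i == j then F i else 0) = F j.
Proof.
by move=> Pj; rewrite (bigD1 j) //= eqxx big1 ?Rplus_0_r // => i /andP[_ /negbTE ->].
Qed.
End RealSums.

Lemma cos_add_2PI_IZR x (z : Z) : cos (x + 2 * PI * IZR z) = cos x.
Proof.
have per k y : cos (y + 2 * PI * INR k) = cos y.
  by rewrite -(cos_period y k); congr cos; ring.
case: (Z_le_gt_dec 0 z) => hz.
- by rewrite -(Z2Nat.id z) // -INR_IZR_INZ per.
- rewrite -(per (Z.to_nat (- z)) (x + 2 * PI * IZR z)); congr cos.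
  rewrite INR_IZR_INZ Z2Nat.id ?opp_IZR; [ring | lia].
Qed.

Lemma sin_add_2PI_IZR x (z : Z) : sin (x + 2 * PI * IZR z) = sin x.
Proof. by rewrite !sin_cos -Rplus_assoc cos_add_2PI_IZR. Qed.

Lemma cos_lt1 x : 0 < Rabs x < 2 * PI -> cos x < 1.
Proof.
move=> hx; have -> : cos x = cos (Rabs x) by rewrite /Rabs; case: Rcase_abs; rewrite ?cos_neg.
rewrite (_ : Rabs x = 2 * (Rabs x / 2)); last by field.
have : 0 < sin (Rabs x / 2) by apply: sin_gt_0; lra.
rewrite cos_2a_sin; nra.
Qed.

Lemma rotation_fixed_eq0 al C S : cos al < 1 ->
  C = cos al * C - sin al * S -> S = sin al * C + cos al * S -> C = 0.
Proof.
move=> hc hC hS; have hsc := sin2_cos2 al; rewrite /Rsqr in hsc.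
have hnorm : ((1 - cos al) * (1 - cos al) + sin al * sin al) * C = 0.
  have e1 : (1 - cos al) * C = - sin al * S by lra.
  have e2 : (1 - cos al) * S = sin al * C by lra.
  have : (1 - cos al) * ((1 - cos al) * C) = - sin al * ((1 - cos al) * S) by rewrite e1; ring.
  rewrite e2; nra.
by case: (Rmult_integral _ _ hnorm) => //; nra.
Qed.

Definition congr_2PI d (y y' : pt d) : Prop :=
  forall i, exists z : Z, y i = y' i + 2 * PI * IZR z.

Lemma dotZ_congr_2PI d l (y y' : pt d) :
  congr_2PI y y' -> exists w : Z, dotZ l y = dotZ l y' + 2 * PI * IZR w.
Proof.
move=> h; apply: (big_rec2 (fun u v => exists w : Z, u = v + 2 * PI * IZR w)).
  by exists 0%Z; ring.
move=> i u v _ [w ->]; have [z ->] := h i; exists (l i * z + w)%Z.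
rewrite plus_IZR mult_IZR; ring.
Qed.

Lemma cos_dotZ_congr_2PI d l (y y' : pt d) : congr_2PI y y' -> cos (dotZ l y) = cos (dotZ l y').
Proof. by move=> /(dotZ_congr_2PI l) [w ->]; rewrite cos_add_2PI_IZR. Qed.

Lemma sin_dotZ_congr_2PI d l (y y' : pt d) : congr_2PI y y' -> sin (dotZ l y) = sin (dotZ l y').
Proof. by move=> /(dotZ_congr_2PI l) [w ->]; rewrite sin_add_2PI_IZR. Qed.

Lemma dotZ_opp d l (y : pt d) : dotZ l (fun i => - y i) = - dotZ l y.
Proof. by rewrite /dotZ -rsumN; apply: eq_bigr => i _; ring. Qed.

Lemma dotZ_sub d l (y w : pt d) : dotZ l (ptsub y w) = dotZ l y - dotZ l w.
Proof. by rewrite /dotZ -rsumB; apply: eq_bigr => i _; rewrite /ptsub; ring. Qed.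

Lemma dotZ_add d l (y w : pt d) : dotZ l (fun i => y i + w i) = dotZ l y + dotZ l w.
Proof. by rewrite /dotZ -big_split /=; apply: eq_bigr => i _; ring. Qed.

Lemma dotN_dotZ d j (y : pt d) : dotN j y = dotZ (fun i => Z.of_nat (j i)) y.
Proof. by apply: eq_bigr => i _; rewrite INR_IZR_INZ. Qed.

Lemma dotN_sub d j (y w : pt d) : dotN j (ptsub y w) = dotN j y - dotN j w.
Proof. by rewrite !dotN_dotZ dotZ_sub. Qed.

Lemma cos_dotN_congr_2PI d j (y y' : pt d) : congr_2PI y y' -> cos (dotN j y) = cos (dotN j y').
Proof. by rewrite !dotN_dotZ; apply: cos_dotZ_congr_2PI. Qed.

Lemma sin_dotN_congr_2PI d j (y y' : pt d) : congr_2PI y y' -> sin (dotN j y) = sin (dotN j y').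
Proof. by rewrite !dotN_dotZ; apply: sin_dotZ_congr_2PI. Qed.

Section Kernel.
Variables (d : nat) (a : ('I_d -> Z) -> R) (K : pt d -> R).
Hypothesis hK : is_kernel a K.

Lemma kernel_ext (y y' : pt d) :
  (forall l, cos (dotZ l y) = cos (dotZ l y')) -> K y = K y'.
Proof.
move=> h; have [_ [_ hcv]] := hK; apply: (UL_sequence _ _ _ (hcv y)).
suff -> : (fun M => boxsum M (fun l => a l * cos (dotZ l y)))
        = (fun M => boxsum M (fun l => a l * cos (dotZ l y'))) by [].
by apply: functional_extensionality => M; apply: eq_bigr => t _; rewrite h.
Qed.

Lemma kernel_congr_2PI (y y' : pt d) : congr_2PI y y' -> K y = K y'.
Proof. by move=> h; apply: kernel_ext => l; apply: cos_dotZ_congr_2PI. Qed.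

Lemma kernel_even (y : pt d) : K (fun i => - y i) = K y.
Proof. by apply: kernel_ext => l; rewrite dotZ_opp cos_neg. Qed.
End Kernel.

Section GridSymmetries.
Variables (d : nat) (n : 'I_d -> nat).
Hypothesis hn : forall i, (0 < n i)%N.
Local Notation SO := (@sumOmega d n).

Lemma double_n_le_Mb i : (2 * n i <= Mb n)%N.
Proof. by rewrite /Mb leq_mul2l (leq_bigmax (F := n)) orbT. Qed.

Lemma double_n_gt0 i : (0 < 2 * n i)%N.
Proof. by rewrite muln_gt0 hn. Qed.

Lemma INR_n_neq0 i : INR (n i) <> 0.
Proof. by apply: not_0_INR; move: (hn i); case: (n i). Qed.

Lemma in_OmegaP (k : idx n) : reflect (forall i, (k i < 2 * n i)%N) (in_Omega k).
Proof. exact: forallP. Qed.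

(* Translation by p and the reflection j |-> -j of the group
   Z/(2 n_1) x ... x Z/(2 n_d), extended by the identity outside Omega_n. *)
Lemma shift_coord_lt i p (v : 'I_(Mb n)) :
  ((if (v < 2 * n i)%N then (v + p) %% (2 * n i) else v) < Mb n)%N.
Proof.
by case: ifP => // _; apply: leq_trans (double_n_le_Mb i); rewrite ltn_pmod ?double_n_gt0.
Qed.
Definition shift_coord i p v : 'I_(Mb n) := Ordinal (shift_coord_lt i p v).
Definition grid_shift (p : 'I_d -> nat) (k : idx n) : idx n :=
  [ffun i => shift_coord i (p i) (k i)].

Lemma refl_coord_lt i (v : 'I_(Mb n)) :
  ((if (v < 2 * n i)%N then (if v == 0%N :> nat then 0 else 2 * n i - v) else v) < Mb n)%N.
Proof.
have := double_n_le_Mb i; have := double_n_gt0 i.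
by case: ifP => //; case: ifP => /= h0; lia.
Qed.
Definition refl_coord i v : 'I_(Mb n) := Ordinal (refl_coord_lt i v).
Definition grid_refl (k : idx n) : idx n := [ffun i => refl_coord i (k i)].

Lemma shift_coord_inj i p : injective (shift_coord i p).
Proof.
move=> v w /(congr1 val) /=; have hp := double_n_gt0 i.
case: ifP => hv; case: ifP => hw e; apply: val_inj => //.
- by move/eqP: e; rewrite -/(_ == _ %[mod _]) eqn_modDr !modn_small // => /eqP.
- by move: hw; rewrite -e ltn_pmod.
- by move: hv; rewrite e ltn_pmod.
Qed.

Lemma grid_shift_inj p : injective (grid_shift p).
Proof.
move=> k l e; apply/ffunP => i; apply: (@shift_coord_inj i (p i)).
by have := congr1 (fun m : idx n => m i) e; rewrite !ffunE.
Qed.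

Lemma grid_refl_involutive : involutive grid_refl.
Proof.
move=> k; apply/ffunP => i; rewrite !ffunE; apply: val_inj => /=.
have := double_n_gt0 i.
case h1: (k i < 2 * n i)%N; case h2: (nat_of_ord (k i) == 0%N) => /= hp.
all: rewrite ?h1 ?h2 /=; repeat (case: ifP => /= ?); lia.
Qed.

Lemma in_Omega_shift p (k : idx n) : in_Omega (grid_shift p k) = in_Omega k.
Proof.
apply/in_OmegaP/in_OmegaP => h i; move: (h i); rewrite ffunE /=.
- by case: ifP => // hk hlt; rewrite hlt in hk.
- by move=> hk; rewrite hk /= ltn_pmod ?double_n_gt0.
Qed.

Lemma in_Omega_refl (k : idx n) : in_Omega (grid_refl k) = in_Omega k.
Proof.
apply/in_OmegaP/in_OmegaP => h i; move: (h i); rewrite ffunE /=.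
- by case: ifP => // hk hlt; rewrite hlt in hk.
- by move=> hk; rewrite hk /=; have := double_n_gt0 i; case: ifP => /= h0; lia.
Qed.

Lemma sumOmega_shift p F : SO F = SO (fun k => F (grid_shift p k)).
Proof.
rewrite /sumOmega (reindex_inj (@grid_shift_inj p)).
by apply: eq_bigl => k; rewrite in_Omega_shift.
Qed.

Lemma sumOmega_refl F : SO F = SO (fun k => F (grid_refl k)).
Proof.
rewrite /sumOmega (reindex_inj (can_inj grid_refl_involutive)).
by apply: eq_bigl => k; rewrite in_Omega_refl.
Qed.

Lemma xg_shift p (k : idx n) : in_Omega k ->
  congr_2PI (xg (grid_shift p k)) (fun i => xg k i + xk n p i).
Proof.
move=> /in_OmegaP hk i; rewrite /xg /xk /idxN ffunE /= hk.
exists (- Z.of_nat ((k i + p i) %/ (2 * n i)))%Z.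
have hdiv : INR (k i + p i) = INR ((k i + p i) %/ (2 * n i)) * (2 * INR (n i))
                          + INR ((k i + p i) %% (2 * n i)).
  by rewrite {1}(divn_eq (k i + p i) (2 * n i)) plus_INR !mult_INR.
rewrite plus_INR in hdiv.
have := @INR_n_neq0 i; rewrite opp_IZR -INR_IZR_INZ => hni.
rewrite (_ : INR ((k i + p i) %% (2 * n i)) = INR (k i) + INR (p i)
             - INR ((k i + p i) %/ (2 * n i)) * (2 * INR (n i))); last lra.
by field.
Qed.

Lemma xg_refl (k : idx n) : in_Omega k -> congr_2PI (xg (grid_refl k)) (fun i => - xg k i).
Proof.
move=> /in_OmegaP hk i; rewrite /xg /xk /idxN ffunE /= hk.
have := @INR_n_neq0 i => hni.
case: ifP => [/eqP -> | _]; first by exists 0%Z; rewrite /=; field.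
exists 1%Z; rewrite minus_INR ?mult_INR /=; first by field.
by apply/leP; apply: ltnW.
Qed.

End GridSymmetries.

Section Counting.
Variables (d : nat) (n : 'I_d -> nat).
Hypothesis hn : forall i, (0 < n i)%N.
Local Notation SO := (@sumOmega d n).

Lemma card_ord_lt (M m : nat) : (m <= M)%N -> #|[pred v : 'I_M | (v < m)%N]| = m.
Proof.
move=> hm; have winj : injective (widen_ord hm) by move=> v w /(congr1 val) e; apply: val_inj.
rewrite -{2}(card_ord m) -(card_image winj 'I_m).
apply: eq_card => v; rewrite !inE; apply/idP/imageP.
- by move=> hv; exists (Ordinal hv) => //; apply: val_inj.
- by move=> [w _ ->] /=.
Qed.

Lemma card_Omega : #|[pred k : idx n | in_Omega k]| = (2 ^ d * \prod_(i < d) n i)%N.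
Proof.
have -> : #|[pred k : idx n | in_Omega k]|
        = #|family (fun i => [pred v : 'I_(Mb n) | (v < 2 * n i)%N])|.
  by apply: eq_card => k; rewrite !inE.
rewrite card_family foldrE big_map big_enum /=.
rewrite (eq_bigr (fun i => 2 * n i)%N) => [|i _]; last by rewrite card_ord_lt ?double_n_le_Mb.
by rewrite big_split /= prod_nat_const card_ord.
Qed.

Lemma sumOmega_1 : SO (fun _ => 1) = Nn n.
Proof. by rewrite /sumOmega rsum_const1 /Nn -card_Omega. Qed.

Lemma Nn_gt0 : 0 < Nn n.
Proof. by apply: lt_0_INR; apply/ltP; rewrite muln_gt0 expn_gt0 prodn_gt0. Qed.

Lemma Mb_gt0 (i : 'I_d) : (0 < Mb n)%N.
Proof. exact: leq_trans (double_n_gt0 hn i) (double_n_le_Mb n i). Qed.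

Definition idx0 : idx n := [ffun i => Ordinal (Mb_gt0 i)].

Lemma in_Omega_idx0 : in_Omega idx0.
Proof. by apply/forallP => i; rewrite ffunE double_n_gt0. Qed.

Lemma dotN_idx0 (y : pt d) : dotN (idxN idx0) y = 0.
Proof. by rewrite /dotN big1 // => i _; rewrite /idxN ffunE /=; ring. Qed.

Lemma sumOmega_idx0 F : SO F = F idx0 + sumOmega_star F.
Proof.
rewrite /sumOmega /sumOmega_star (bigD1 idx0) ?in_Omega_idx0 //; congr (_ + _).
apply: eq_bigl => k; rewrite /in_Omega_star; congr (_ && _).
case: (boolP [exists i, nat_of_ord (k i) != 0%N]) => h.
- by apply/eqP => e; move: h => /existsP [i]; rewrite e ffunE.
- apply/negbTE/negPn/eqP/ffunP => i; apply: val_inj; rewrite ffunE /=.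
  by move: h => /existsPn /(_ i) /negPn /eqP.
Qed.

End Counting.

Section Orthogonality.
Variables (d : nat) (n : 'I_d -> nat).
Hypothesis hn : forall i, (0 < n i)%N.
Local Notation SO := (@sumOmega d n).

Definition unitv (i : 'I_d) : 'I_d -> nat := fun l => if l == i then 1%N else 0%N.

Lemma dotZ_unitv z i : dotZ z (xk n (unitv i)) = IZR (z i) * PI / INR (n i).
Proof.
have := @INR_n_neq0 d n hn i => hni.
rewrite /dotZ (bigD1 i) //= big1 => [|l /negbTE hl]; rewrite /xk /unitv ?eqxx ?hl /=.
- by field.
- by rewrite /Rdiv !Rmult_0_r Rmult_0_l Rmult_0_r.
Qed.

Lemma cos_dotZ_unitv_lt1 z i : (z i <> 0)%Z ->
  (- Z.of_nat (2 * n i) < z i < Z.of_nat (2 * n i))%Z ->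
  cos (dotZ z (xk n (unitv i))) < 1.
Proof.
move=> hz hb; rewrite dotZ_unitv; apply: cos_lt1.
have hni : 0 < INR (n i) by apply: lt_0_INR; apply/ltP.
have hpi := PI_RGT_0.
have hzb : 0 < Rabs (IZR (z i)) < 2 * INR (n i).
  split; first by apply: Rabs_pos_lt; apply: not_0_IZR.
  rewrite (_ : 2 * INR (n i) = IZR (Z.of_nat (2 * n i))); last by rewrite -INR_IZR_INZ mult_INR.
  by apply: Rabs_def1; [apply: IZR_lt; lia | rewrite -opp_IZR; apply: IZR_lt; lia].
have -> : Rabs (IZR (z i) * PI / INR (n i)) = Rabs (IZR (z i)) / INR (n i) * PI.
  rewrite /Rdiv (Rabs_mult (IZR (z i) * PI)) (Rabs_mult (IZR (z i))) Rabs_inv.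
  rewrite (Rabs_right PI) ?(Rabs_right (INR (n i))); try lra; ring.
have hr : 0 < Rabs (IZR (z i)) / INR (n i) < 2.
  split; first by apply: Rdiv_lt_0_compat; lra.
  by apply: (Rmult_lt_reg_r (INR (n i))) => //; rewrite /Rdiv Rmult_assoc Rinv_l; lra.
nra.
Qed.

(* Translating the grid by the i-th unit vector rotates every angle
   z . x_m by the same angle pi z_i / n_i, which is not a multiple of 2 pi. *)
Lemma sumOmega_cos_dotZ_eq0 z i be : (z i <> 0)%Z ->
  (- Z.of_nat (2 * n i) < z i < Z.of_nat (2 * n i))%Z ->
  SO (fun m => cos (dotZ z (xg m) + be)) = 0.
Proof.
move=> hz hb; set al := dotZ z (xk n (unitv i)).
have shiftE m : in_Omega m -> exists w : Z,
    dotZ z (xg (grid_shift hn (unitv i) m)) + be = dotZ z (xg m) + be + al + 2 * PI * IZR w.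
  move=> hm; have [w ->] := dotZ_congr_2PI z (xg_shift hn (unitv i) hm).
  by exists w; rewrite dotZ_add /al; ring.
apply: (rotation_fixed_eq0 (al := al) (S := SO (fun m => sin (dotZ z (xg m) + be)))).
- exact: cos_dotZ_unitv_lt1.
- rewrite {1}(sumOmega_shift hn (unitv i)) /sumOmega !big_distrr -rsumB.
  apply: eq_bigr => m hm; have [w ->] := shiftE m hm.
  by rewrite cos_add_2PI_IZR cos_plus /=; ring.
- rewrite {1}(sumOmega_shift hn (unitv i)) /sumOmega !big_distrr -big_split.
  apply: eq_bigr => m hm; have [w ->] := shiftE m hm.
  by rewrite sin_add_2PI_IZR sin_plus /=; ring.
Qed.

End Orthogonality.

Section Rho.
Variables (d : nat) (n : 'I_d -> nat) (a : ('I_d -> Z) -> R) (K : pt d -> R).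
Hypothesis hn : forall i, (0 < n i)%N.
Hypothesis hK : is_kernel a K.
Local Notation SO := (@sumOmega d n).
Local Notation N := (Nn n).

Lemma rho_translate j x (k : idx n) : in_Omega k ->
  rho n K j (ptsub x (xg k))
  = 2 / N * SO (fun m => cos (dotN j (ptsub (xg m) (xg k))) * K (ptsub x (xg m))).
Proof.
move=> hk; rewrite /rho; congr (_ * _); rewrite [RHS](sumOmega_shift hn (idxN k)).
apply: eq_bigr => m hm; have hE := xg_shift hn (idxN k) hm.
change (xk n (idxN k)) with (xg k) in hE.
congr (_ * _).
- apply: cos_dotN_congr_2PI => l; rewrite /ptsub; have [w ->] := hE l.
  by exists (- w)%Z; rewrite opp_IZR; ring.
- apply: (kernel_congr_2PI hK) => l; rewrite /ptsub; have [w ->] := hE l.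
  by exists w; ring.
Qed.

(* The reflection x_p |-> -x_p of the grid makes this sum odd. *)
Lemma sumOmega_sin_kernel_eq0 j : SO (fun p => sin (dotN j (xg p)) * K (xg p)) = 0.
Proof.
suff : SO (fun p => sin (dotN j (xg p)) * K (xg p))
     = - SO (fun p => sin (dotN j (xg p)) * K (xg p)) by lra.
rewrite {1}(sumOmega_refl hn) /sumOmega -rsumN; apply: eq_bigr => p hp.
have hE := xg_refl hn hp.
rewrite (sin_dotN_congr_2PI _ hE) (kernel_congr_2PI hK hE) (kernel_even hK).
by rewrite !dotN_dotZ dotZ_opp sin_neg; ring.
Qed.

Lemma rho_at0 j : rho n K j (@pt0 d) = 2 / N * SO (fun p => cos (dotN j (xg p)) * K (xg p)).
Proof.
rewrite /rho; congr (_ * _); apply: eq_bigr => p _; congr (_ * _).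
rewrite -(kernel_even hK); apply: (kernel_congr_2PI hK) => l.
by exists 0%Z; rewrite /ptsub /pt0; ring.
Qed.

Lemma rho_grid j (q k : idx n) : in_Omega q -> in_Omega k ->
  rho n K j (ptsub (xg q) (xg k)) = cos (dotN j (ptsub (xg q) (xg k))) * rho n K j (@pt0 d).
Proof.
move=> hq hk; rewrite rho_translate // rho_at0.
set A := dotN j (ptsub (xg q) (xg k)).
suff -> : SO (fun m => cos (dotN j (ptsub (xg m) (xg k))) * K (ptsub (xg q) (xg m)))
   = cos A * SO (fun p => cos (dotN j (xg p)) * K (xg p))
     + sin A * SO (fun p => sin (dotN j (xg p)) * K (xg p)).
  by rewrite sumOmega_sin_kernel_eq0; ring.
rewrite (sumOmega_shift hn (idxN q)) (sumOmega_refl hn) /sumOmega !big_distrr -big_split.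
apply: eq_bigr => m hm.
have hE : congr_2PI (xg (grid_shift hn (idxN q) (grid_refl hn m))) (fun l => xg q l - xg m l).
  move=> l; have [w1 ->] := xg_shift hn (idxN q) (etrans (in_Omega_refl hn m) hm) l.
  have [w2 ->] := xg_refl hn hm l; exists (w1 + w2)%Z.
  by rewrite /xg plus_IZR; ring.
rewrite (kernel_congr_2PI hK (y' := xg m)); last first.
  move=> l; rewrite /ptsub; have [w ->] := hE l; exists (- w)%Z; rewrite opp_IZR; ring.
rewrite (cos_dotN_congr_2PI j (y' := ptsub (ptsub (xg q) (xg k)) (xg m))); last first.
  move=> l; rewrite /ptsub; have [w ->] := hE l; exists w; ring.
by rewrite dotN_sub -/A cos_minus /=; ring.
Qed.

End Rho.

Lemma is_sk_spline_sub d (n : 'I_d -> nat) (K : pt d -> R) s1 s2 :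
  is_sk_spline n K s1 -> is_sk_spline n K s2 -> is_sk_spline n K (fun x => s1 x - s2 x).
Proof.
move=> [c1 [ck1 [h1 e1]]] [c2 [ck2 [h2 e2]]].
exists (c1 - c2), (fun k => ck1 k - ck2 k); split.
  by rewrite /sumOmega rsumB -/(sumOmega ck1) -/(sumOmega ck2) h1 h2 Rminus_0_r.
move=> x; rewrite e1 e2.
have -> : @sumOmega d n (fun k => (ck1 k - ck2 k) * K (ptsub x (xg k)))
        = @sumOmega d n (fun k => ck1 k * K (ptsub x (xg k)))
          - @sumOmega d n (fun k => ck2 k * K (ptsub x (xg k))).
  by rewrite /sumOmega -rsumB; apply: eq_bigr => k _; ring.
ring.
Qed.

Section FundamentalSpline.
Variables (d : nat) (n : 'I_d -> nat) (a : ('I_d -> Z) -> R) (K : pt d -> R).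
Hypothesis hn : forall i, (0 < n i)%N.
Hypothesis hK : is_kernel a K.
Hypothesis hrho : forall j : idx n, in_Omega_star j -> rho n K (idxN j) (@pt0 d) <> 0.
Local Notation SO := (@sumOmega d n).
Local Notation SOs := (@sumOmega_star d n).
Local Notation N := (Nn n).

Lemma sk_fund_grid (q k : idx n) : in_Omega q -> in_Omega k ->
  sk_fund n K (ptsub (xg q) (xg k)) = if q == k then 1 else 0.
Proof.
move=> hq hk; have hN := Nn_gt0 hn; rewrite /sk_fund.
rewrite (_ : SOs _ = SOs (fun j => cos (dotN (idxN j) (ptsub (xg q) (xg k))))); last first.
  by apply: eq_bigr => j hj; rewrite (rho_grid hn hK) //; field; apply: hrho.
rewrite (_ : 1 / N + _ = 1 / N * SO (fun j => cos (dotN (idxN j) (ptsub (xg q) (xg k)))));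
  last by rewrite (sumOmega_idx0 hn) dotN_idx0 cos_0; ring.
case: eqP => [-> | /eqP hne].
  have -> : SO (fun j => cos (dotN (idxN j) (ptsub (xg k) (xg k)))) = N.
    by rewrite -sumOmega_1; apply: eq_bigr => j _; rewrite dotN_sub Rminus_diag cos_0.
  by field; lra.
have [i hi] : exists i, q i != k i.
  apply/existsP; apply: contraR hne => /existsPn hqk.
  by apply/eqP/ffunP => i; apply/eqP/negPn/hqk.
set z := fun l => (Z.of_nat (idxN q l) - Z.of_nat (idxN k l))%Z.
rewrite (_ : SO _ = SO (fun j => cos (dotZ z (xg j) + 0))); last first.
  apply: eq_bigr => j _; congr cos; rewrite Rplus_0_r; apply: eq_bigr => l _.
  by rewrite /z minus_IZR -!INR_IZR_INZ /ptsub /xg /xk; field; apply: INR_n_neq0.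
rewrite (sumOmega_cos_dotZ_eq0 hn (i := i)); first by ring.
- by rewrite /z /idxN => /Zminus_eq /Nat2Z.inj /val_inj /eqP; rewrite (negbTE hi).
- by move: hq hk => /in_OmegaP /(_ i) hq /in_OmegaP /(_ i) hk; rewrite /z /idxN; lia.
Qed.

Definition fund_coef (k m : idx n) : R :=
  1 / N * SOs (fun j => 2 / N * cos (dotN (idxN j) (ptsub (xg m) (xg k)))
                        / rho n K (idxN j) (@pt0 d)).

Lemma sk_fund_translate (k : idx n) x : in_Omega k ->
  sk_fund n K (ptsub x (xg k)) = 1 / N + SO (fun m => fund_coef k m * K (ptsub x (xg m))).
Proof.
move=> hk; rewrite /sk_fund; congr (_ + _).
transitivity (1 / N * SOs (fun j => SO (fun m =>
    2 / N * cos (dotN (idxN j) (ptsub (xg m) (xg k))) / rho n K (idxN j) (@pt0 d)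
    * K (ptsub x (xg m))))).
  congr (_ * _); apply: eq_bigr => j _; rewrite (rho_translate hn hK) //.
  set c := 2 / N / rho n K (idxN j) (@pt0 d).
  transitivity (c * SO (fun m => cos (dotN (idxN j) (ptsub (xg m) (xg k))) * K (ptsub x (xg m)))).
    by rewrite /c /Rdiv; ring.
  by rewrite /sumOmega big_distrr /=; apply: eq_bigr => m _; rewrite /c /Rdiv; ring.
rewrite /sumOmega /sumOmega_star exchange_big big_distrr /=; apply: eq_bigr => m _.
by rewrite /fund_coef /sumOmega_star Rmult_assoc big_distrl.
Qed.

Lemma fund_coef_sum (k : idx n) : in_Omega k -> SO (fund_coef k) = 0.
Proof.
move=> hk; rewrite /sumOmega /fund_coef -big_distrr /= /sumOmega_star exchange_big /=.
rewrite big1 ?Rmult_0_r // => j /andP [/in_OmegaP hj /existsP [i /eqP hi]].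
set be := - dotN (idxN j) (xg k).
rewrite (eq_bigr (fun m => 2 / N / rho n K (idxN j) (@pt0 d) * cos (dotN (idxN j) (xg m) + be)))
  => [|m _]; last by rewrite dotN_sub /be /Rminus /Rdiv; ring.
rewrite -big_distrr /=; under eq_bigr => m _ do rewrite dotN_dotZ.
have := sumOmega_cos_dotZ_eq0 hn (z := fun l => Z.of_nat (idxN j l)) (i := i) be.
rewrite /sumOmega => -> //; first by ring.
- by rewrite /idxN; lia.
- by have := hj i; rewrite /idxN; lia.
Qed.

Lemma sk_interp_spline f : is_sk_spline n K (sk_interp n K f).
Proof.
exists (SO (fun k => f (xg k)) / N), (fun m => SO (fun k => f (xg k) * fund_coef k m)).
split.
- rewrite /sumOmega exchange_big big1 // => k hk; rewrite -big_distrr /=.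
  by have := fund_coef_sum hk; rewrite /sumOmega => ->; ring.
- move=> x; rewrite /sk_interp.
  transitivity (SO (fun k => f (xg k) / N
                 + SO (fun m => f (xg k) * fund_coef k m * K (ptsub x (xg m))))).
    apply: eq_bigr => k hk; rewrite sk_fund_translate // Rmult_plus_distr_l /sumOmega big_distrr /=.
    by congr (_ + _); [rewrite /Rdiv; ring | apply: eq_bigr => m _; ring].
  rewrite /sumOmega big_split /=; congr (_ + _); first by rewrite /Rdiv big_distrl.
  by rewrite exchange_big; apply: eq_bigr => m _; rewrite big_distrl.
Qed.

Lemma sk_interp_grid f (q : idx n) : in_Omega q -> sk_interp n K f (xg q) = f (xg q).
Proof.
move=> hq; rewrite /sk_interp /sumOmega -(rsum_delta (fun k => f (xg k)) hq).
by apply: eq_bigr => k hk; rewrite sk_fund_grid // eq_sym; case: eqP => _; ring.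
Qed.

Lemma fund_coef_kernel_grid (p k : idx n) : in_Omega p -> in_Omega k ->
  SO (fun q => fund_coef p q * K (ptsub (xg q) (xg k))) = (if k == p then 1 else 0) - 1 / N.
Proof.
move=> hp hk; rewrite -(sk_fund_grid hk hp) (sk_fund_translate _ hp); ring_simplify.
apply: eq_bigr => q _; congr (_ * _); rewrite -(kernel_even hK).
by congr K; apply: functional_extensionality => l; rewrite /ptsub; ring.
Qed.

Lemma sk_spline_coef_recover s c ck :
  SO ck = 0 -> (forall x, s x = c + SO (fun k => ck k * K (ptsub x (xg k)))) ->
  forall p, in_Omega p -> SO (fun q => fund_coef p q * s (xg q)) = ck p.
Proof.
move=> hsum hs p hp.
transitivity (c * SO (fund_coef p)
              + SO (fun k => ck k * SO (fun q => fund_coef p q * K (ptsub (xg q) (xg k))))).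
  rewrite /sumOmega big_distrr /=.
  under [X in _ = _ + X]eq_bigr => k _ do rewrite big_distrr /=.
  rewrite [X in _ = _ + X]exchange_big -big_split /=; apply: eq_bigr => q _.
  rewrite hs /sumOmega Rmult_plus_distr_l big_distrr /=; congr (_ + _); first by ring.
  by apply: eq_bigr => k _; ring.
rewrite fund_coef_sum // Rmult_0_r Rplus_0_l.
have -> : SO (fun k => ck k * SO (fun q => fund_coef p q * K (ptsub (xg q) (xg k))))
        = SO (fun k => (if k == p then ck k else 0) - 1 / N * ck k).
  by apply: eq_bigr => k hk; rewrite fund_coef_kernel_grid //; case: eqP => _; ring.
by move: hsum; rewrite /sumOmega rsumB rsum_delta // -big_distrr /= => ->; ring.
Qed.

Lemma sk_spline_eq0 s : is_sk_spline n K s ->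
  (forall q : idx n, in_Omega q -> s (xg q) = 0) -> forall x, s x = 0.
Proof.
move=> [c [ck [hsum hs]]] hz.
have hck p : in_Omega p -> ck p = 0.
  move=> hp; rewrite -(sk_spline_coef_recover hsum hs hp).
  by apply: big1 => q hq; rewrite hz //; ring.
have hck0 x : SO (fun k => ck k * K (ptsub x (xg k))) = 0.
  by apply: big1 => k hk; rewrite hck //; ring.
have hc : c = 0 by have := hz _ (in_Omega_idx0 hn); rewrite hs hck0 Rplus_0_r.
by move=> x; rewrite hs hck0 hc Rplus_0_r.
Qed.

End FundamentalSpline.

Theorem theorem4p5 (d : nat) (n : 'I_d -> nat) (a : ('I_d -> Z) -> R) (K : pt d -> R) :
  (forall i, (0 < n i)%N) ->
  is_kernel a K ->
  (forall j : idx n, in_Omega_star j -> rho n K (idxN j) (@pt0 d) <> 0) ->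
  forall f : pt d -> R,
    (exists! s : pt d -> R,
        is_sk_spline n K s /\ (forall j : idx n, in_Omega j -> s (xg j) = f (xg j))) /\
    (forall s : pt d -> R,
        is_sk_spline n K s -> (forall j : idx n, in_Omega j -> s (xg j) = f (xg j)) ->
        forall x, s x = sk_interp n K f x).
Proof.
move=> hn hK hrho f.
have interp_unique s : is_sk_spline n K s ->
    (forall j : idx n, in_Omega j -> s (xg j) = f (xg j)) -> forall x, s x = sk_interp n K f x.
  move=> hs hv x; apply: Rminus_diag_uniq; move: x.
  apply: (sk_spline_eq0 hn hK hrho (is_sk_spline_sub hs (sk_interp_spline hn hK f))) => q hq.
  by rewrite hv // (sk_interp_grid hn hK hrho) // Rminus_diag.
split; last exact: interp_unique.
exists (sk_interp n K f); split.
  by split; [exact: (sk_interp_spline hn hK) | move=> j; exact: (sk_interp_grid hn hK hrho)].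
by move=> s [hs hv]; apply: functional_extensionality => x; rewrite (interp_unique s hs hv).
Qed.
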